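(* Let $z,w\in H^2$ be distinct points of the hyperbolic plane and $k\in\mathbb R$. Define the square hyperbola $S_k(z,w)=\{x\in H^2 : d_H(x,z)^2-d_H(x,w)^2=k\}$. Then the endpoints on the ideal boundary of $H^2$ of $S_k(z,w)$ are the same as the endpoints of the equidistant line $S_0(z,w)=\{x\in H^2: d_H(x,z)=d_H(x,w)\}$.
   Context: $d_H$ denotes the hyperbolic distance on $H^2$. *)

(* concrete reals R. Upper half-plane model of H^2. *)
From Stdlib Require Import Reals.
Open Scope R_scope.

Definition arcosh (t : R) : R := ln (t + sqrt (t ^ 2 - 1)).

Definition inH2 (p : R * R) : Prop := 0 < snd p.

Definition dH (p q : R * R) : R :=
  arcosh (1 + ((fst p - fst q) ^ 2 + (snd p - snd q) ^ 2)
              / (2 * snd p * snd q)).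

Definition sq_hyperbola (k : R) (z w : R * R) (x : R * R) : Prop :=
  inH2 x /\ dH x z ^ 2 - dH x w ^ 2 = k.

Definition equidistant (z w : R * R) (x : R * R) : Prop :=
  inH2 x /\ dH x z = dH x w.

Inductive ideal_pt : Type := IFin (a : R) | IInf.

Definition cv_ideal (u : nat -> R * R) (xi : ideal_pt) : Prop :=
  match xi with
  | IFin a => Un_cv (fun n => fst (u n)) a /\ Un_cv (fun n => snd (u n)) 0
  | IInf => cv_infty (fun n => fst (u n) ^ 2 + snd (u n) ^ 2)
  end.

Definition ideal_endpoints (S : R * R -> Prop) (xi : ideal_pt) : Prop :=
  exists u : nat -> R * R, (forall n, S (u n)) /\ cv_ideal u xi.

From Stdlib Require Import Reals Lra Psatz ClassicalEpsilon.
From Coquelicot Require Import Coquelicot.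
Open Scope R_scope.

(* In the upper half-plane, 2 Im(x) cosh d(x,z) = U_z(Re x) + Im(x)^2 / Im z with
   U_z(t) = |t - z|^2 / Im z.  So as x tends to a real point a, both cosh d(x,z) and cosh d(x,w)
   blow up like 1 / Im x, with ratio tending to U_z(a) / U_w(a).  Since arcosh A = ln (2A) + o(1),
   d(x,z)^2 - d(x,w)^2 then tends to +oo or -oo unless U_z(a) = U_w(a); hence a finite endpoint
   of S_k is a root of U_z - U_w, whatever k is.  Conversely, for z <> w every root a of U_z - U_w
   is simple, so on a low horizontal line near a the difference d(.,z)^2 - d(.,w)^2 takes values
   above and below k, and the intermediate value theorem produces points of S_k converging to a.
   The ideal point oo is sent to 0 by the isometry x |-> -1/x, and U_{-1/z}(0) = 1 / Im z. *)

(** * Bounds on arcosh *)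

Lemma ln_le_compat x y : 0 < x -> x <= y -> ln x <= ln y.
Proof. intros Hx [Hxy | <-]; [left; now apply ln_increasing | right; reflexivity]. Qed.

Lemma arcosh_ge_ln_2A_sub_inv A : 1 <= A -> ln (2 * A - / A) <= arcosh A.
Proof.
intros HA. unfold arcosh.
assert (Hinv : 0 < / A <= 1).
{ split; [apply Rinv_0_lt_compat; lra|].
  rewrite <- Rinv_1. apply Rinv_le_contravar; lra. }
assert (HAinv : A * / A = 1) by (field; lra).
assert (A - / A <= sqrt (A ^ 2 - 1)).
{ rewrite <- (sqrt_pow2 (A - / A)) by nra. apply sqrt_le_1_alt. nra. }
apply ln_le_compat; nra.
Qed.

Lemma arcosh_le_ln_2A A : 1 <= A -> arcosh A <= ln (2 * A).
Proof.
intros HA. unfold arcosh.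
pose proof (sqrt_pos (A ^ 2 - 1)).
assert (sqrt (A ^ 2 - 1) <= A).
{ rewrite <- (sqrt_pow2 A) at 2 by lra. apply sqrt_le_1_alt. nra. }
apply ln_le_compat; nra.
Qed.

Lemma ln_le_arcosh A : 1 <= A -> ln A <= arcosh A.
Proof.
intros HA. unfold arcosh. pose proof (sqrt_pos (A ^ 2 - 1)).
apply ln_le_compat; lra.
Qed.

Lemma arcosh_ge0 A : 1 <= A -> 0 <= arcosh A.
Proof.
intros HA. rewrite <- ln_1.
apply (Rle_trans _ (ln A)); [apply ln_le_compat; lra | now apply ln_le_arcosh].
Qed.

Lemma arcosh_sub_ge c A B : 1 < c -> 1 <= B -> c * B <= A -> c / (c - 1) <= A ->
  ln ((1 + c) / 2) <= arcosh A - arcosh B.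
Proof.
intros Hc HB HcBA HcA.
assert (HA : 1 <= A) by nra.
assert (HAc : c <= A * (c - 1)).
{ replace c with (c / (c - 1) * (c - 1)) at 1 by (field; lra).
  apply Rmult_le_compat_r; lra. }
assert (Hinv : 0 < / A <= 1).
{ split; [apply Rinv_0_lt_compat; lra|].
  rewrite <- Rinv_1. apply Rinv_le_contravar; lra. }
assert (Hgap : (1 + c) * B <= 2 * A - / A).
{ assert (c * (2 * A - / A) - (1 + c) * A = A * (c - 1) - c * / A) by ring.
  nra. }
pose proof (arcosh_ge_ln_2A_sub_inv A HA).
pose proof (arcosh_le_ln_2A B HB).
assert (ln ((1 + c) / 2) + ln (2 * B) <= ln (2 * A - / A)).
{ rewrite <- ln_mult by lra. apply ln_le_compat; nra. }
lra.
Qed.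

(* [d_A - d_B >= ln ((1+c)/2)] and [d_A >= ln A], so [d_A^2 - d_B^2 >= ln ((1+c)/2) * ln A]. *)
Lemma arcosh_sq_sub_unbounded c K : 1 < c ->
  exists M, forall A B, 1 <= B -> c * B <= A -> M <= A -> K < arcosh A ^ 2 - arcosh B ^ 2.
Proof.
intros Hc.
set (g := ln ((1 + c) / 2)).
assert (Hg : 0 < g) by (unfold g; rewrite <- ln_1; apply ln_increasing; lra).
exists (c / (c - 1) + exp (K / g)).
intros A B HB HcBA HMA.
assert (Hcc : 0 < c / (c - 1)) by (apply Rdiv_lt_0_compat; lra).
pose proof (exp_pos (K / g)).
pose proof (arcosh_sub_ge c A B Hc HB HcBA ltac:(lra)) as Hsub.
pose proof (arcosh_ge0 B HB).
assert (HlnA : K / g < ln A).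
{ rewrite <- (ln_exp (K / g)). apply ln_increasing; lra. }
pose proof (ln_le_arcosh A ltac:(nra)).
assert (g * (K / g) = K) by (field; lra).
fold g in Hsub. nra.
Qed.

Lemma continuous_arcosh u : 1 <= u -> continuous arcosh u.
Proof.
intros Hu. unfold arcosh.
apply (continuous_comp (fun t => t + sqrt (t ^ 2 - 1)) ln).
- apply (continuous_plus (fun t => t) (fun t => sqrt (t ^ 2 - 1))).
  + apply continuous_id.
  + apply continuous_sqrt_comp, (ex_derive_continuous (V := R_NormedModule)).
    auto_derive. exact I.
- apply continuous_ln. pose proof (sqrt_pos (u ^ 2 - 1)). lra.
Qed.

(** * Hyperbolic distance near the real axis *)

Definition cosh_dist (p q : R * R) : R :=
  1 + ((fst p - fst q) ^ 2 + (snd p - snd q) ^ 2) / (2 * snd p * snd q).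

(* [inv_poisson z a = |a - z|^2 / Im z] is the reciprocal of the Poisson kernel of [z] at the
   boundary point [a]; as [x] tends to [a], [cosh (dH x z)] behaves like
   [inv_poisson z a / (2 Im x)]. *)
Definition inv_poisson (z : R * R) (t : R) : R := ((t - fst z) ^ 2 + snd z ^ 2) / snd z.

Lemma dH_cosh_dist p q : dH p q = arcosh (cosh_dist p q).
Proof. reflexivity. Qed.

Lemma cosh_dist_ge1 p q : inH2 p -> inH2 q -> 1 <= cosh_dist p q.
Proof.
unfold inH2, cosh_dist. intros Hp Hq.
enough (0 <= ((fst p - fst q) ^ 2 + (snd p - snd q) ^ 2) / (2 * snd p * snd q)) by lra.
pose proof (pow2_ge_0 (fst p - fst q)). pose proof (pow2_ge_0 (snd p - snd q)).
apply Rdiv_le_0_compat; [lra | apply Rmult_lt_0_compat; lra].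
Qed.

Lemma dH_ge0 p q : inH2 p -> inH2 q -> 0 <= dH p q.
Proof. intros. apply arcosh_ge0, cosh_dist_ge1; assumption. Qed.

Lemma scaled_cosh_dist x z : inH2 x -> inH2 z ->
  2 * snd x * cosh_dist x z = inv_poisson z (fst x) + snd x ^ 2 / snd z.
Proof. unfold inH2, cosh_dist, inv_poisson. intros. field. lra. Qed.

Lemma inv_poisson_pos z t : inH2 z -> 0 < inv_poisson z t.
Proof. unfold inH2, inv_poisson. intros Hz.
pose proof (pow2_ge_0 (t - fst z)). pose proof (pow_lt (snd z) 2 Hz).
apply Rdiv_lt_0_compat; lra.
Qed.

Lemma continuous_sq_dH_horizontal y z t : 0 < y -> inH2 z ->
  continuous (fun s => dH (s, y) z ^ 2) t.
Proof.
unfold inH2. intros Hy Hz.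
apply (continuous_comp (fun s => dH (s, y) z) (fun d => d ^ 2)).
- apply (continuous_comp (fun s => cosh_dist (s, y) z) arcosh).
  + apply (ex_derive_continuous (V := R_NormedModule)).
    unfold cosh_dist; simpl. auto_derive. exact I.
  + apply continuous_arcosh, cosh_dist_ge1; unfold inH2; simpl; lra.
- apply (ex_derive_continuous (V := R_NormedModule)). auto_derive. exact I.
Qed.

Lemma Un_cv_const c : Un_cv (fun _ => c) c.
Proof.
intros eps Heps. exists 0%nat. intros. unfold R_dist. rewrite Rminus_diag, Rabs_R0. exact Heps.
Qed.

Lemma Un_cv_ex_derive_comp f v l : ex_derive f l -> Un_cv v l -> Un_cv (fun n => f (v n)) (f l).
Proof.
intros Hf. apply continuity_seq, continuity_pt_filterlim.
exact (ex_derive_continuous (V := R_NormedModule) f l Hf).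
Qed.

Lemma Un_cv_eventually_pos v l : Un_cv v l -> 0 < l -> exists N, forall n, (N <= n)%nat -> 0 < v n.
Proof.
intros Hv Hl. destruct (Hv l Hl) as [N HN]. exists N. intros n Hn.
specialize (HN n Hn). unfold R_dist in HN. apply Rabs_def2 in HN. lra.
Qed.

Lemma Un_cv_of_Rabs_lt_RinvN v l : (forall n, Rabs (v n - l) < RinvN n) -> Un_cv v l.
Proof.
intros Hv eps Heps. destruct (RinvN_cv Heps) as [N HN]. exists N. intros n Hn.
specialize (HN n Hn). specialize (Hv n). unfold R_dist in *.
rewrite Rminus_0_r, Rabs_pos_eq in HN by (left; apply cond_pos). lra.
Qed.

Lemma cv_scaled_cosh_dist z u a : inH2 z -> (forall n, inH2 (u n)) -> cv_ideal u (IFin a) ->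
  Un_cv (fun n => 2 * snd (u n) * cosh_dist (u n) z) (inv_poisson z a).
Proof.
intros Hz Hu [Hfst Hsnd].
assert (Hlim : Un_cv (fun n => inv_poisson z (fst (u n)) + snd (u n) ^ 2 / snd z)
                     (inv_poisson z a + 0 ^ 2 / snd z)).
{ apply CV_plus.
  - apply (Un_cv_ex_derive_comp (inv_poisson z)); [|exact Hfst].
    unfold inv_poisson. auto_derive. exact I.
  - apply (Un_cv_ex_derive_comp (fun s => s ^ 2 / snd z)); [|exact Hsnd].
    auto_derive. exact I. }
replace (inv_poisson z a + 0 ^ 2 / snd z) with (inv_poisson z a) in Hlim
  by (unfold inH2 in Hz; field; lra).
apply (Un_cv_ext _ _ (fun n => eq_sym (scaled_cosh_dist (u n) z (Hu n) Hz))).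
exact Hlim.
Qed.

(* Near a boundary point [a] with [inv_poisson w a < inv_poisson z a], [cosh (dH x z)] is at least
   [c] times [cosh (dH x w)] for some [c > 1], and tends to infinity. *)
Lemma sq_dH_sub_eventually_gt z w a K u : inH2 z -> inH2 w ->
  inv_poisson w a < inv_poisson z a -> (forall n, inH2 (u n)) -> cv_ideal u (IFin a) ->
  exists N, forall n, (N <= n)%nat -> K < dH (u n) z ^ 2 - dH (u n) w ^ 2.
Proof.
intros Hz Hw Ha Hu Hcv.
pose proof (inv_poisson_pos w a Hw).
set (c := (inv_poisson z a + inv_poisson w a) / (2 * inv_poisson w a)).
assert (Hc : 1 < c).
{ unfold c. apply Rlt_div_r; lra. }
assert (Hcw : c * inv_poisson w a < inv_poisson z a) by (unfold c; field_simplify; lra).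
destruct (arcosh_sq_sub_unbounded c K Hc) as [M HM].
pose proof (cv_scaled_cosh_dist z u a Hz Hu Hcv) as Hcvz.
pose proof (cv_scaled_cosh_dist w u a Hw Hu Hcv) as Hcvw.
assert (Hratio : Un_cv (fun n => 2 * snd (u n) * cosh_dist (u n) z
                                 - c * (2 * snd (u n) * cosh_dist (u n) w))
                       (inv_poisson z a - c * inv_poisson w a)).
{ apply CV_minus; [exact Hcvz|].
  apply (Un_cv_ex_derive_comp (fun t => c * t)); [auto_derive; exact I | exact Hcvw]. }
assert (Hlarge : Un_cv (fun n => 2 * snd (u n) * cosh_dist (u n) z - 2 * M * snd (u n))
                       (inv_poisson z a - 2 * M * 0)).
{ apply CV_minus; [exact Hcvz|].
  apply (Un_cv_ex_derive_comp (fun t => 2 * M * t)); [auto_derive; exact I | apply Hcv]. }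
destruct (Un_cv_eventually_pos _ _ Hratio ltac:(lra)) as [N1 HN1].
destruct (Un_cv_eventually_pos _ _ Hlarge ltac:(lra)) as [N2 HN2].
exists (max N1 N2). intros n Hn.
specialize (HN1 n ltac:(lia)). specialize (HN2 n ltac:(lia)).
pose proof (Hu n) as Hun. unfold inH2 in Hun.
rewrite !dH_cosh_dist. apply HM; [apply cosh_dist_ge1; auto | nra | nra].
Qed.

(** * Finite endpoints *)

Lemma sq_hyperbola_endpoint_fin_necessary k z w a : inH2 z -> inH2 w ->
  ideal_endpoints (sq_hyperbola k z w) (IFin a) -> inv_poisson z a = inv_poisson w a.
Proof.
intros Hz Hw [u [Hu Hcv]].
assert (Hin : forall n, inH2 (u n)) by (intro n; apply Hu).
destruct (Rtotal_order (inv_poisson z a) (inv_poisson w a)) as [Hlt | [Heq | Hgt]];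
  [exfalso | exact Heq | exfalso].
- destruct (sq_dH_sub_eventually_gt w z a (- k) u Hw Hz Hlt Hin Hcv) as [N HN].
  specialize (HN N (Nat.le_refl N)). destruct (Hu N). lra.
- destruct (sq_dH_sub_eventually_gt z w a k u Hz Hw Hgt Hin Hcv) as [N HN].
  specialize (HN N (Nat.le_refl N)). destruct (Hu N). lra.
Qed.

Lemma sq_hyperbola_crossing k z w tp tn eps : inH2 z -> inH2 w -> 0 < eps ->
  inv_poisson w tp < inv_poisson z tp -> inv_poisson z tn < inv_poisson w tn ->
  exists x, sq_hyperbola k z w x /\ Rmin tn tp <= fst x <= Rmax tn tp /\ snd x < eps.
Proof.
intros Hz Hw Heps Hp Hn.
set (y := fun n => eps / 2 * RinvN n).
assert (Hy : forall n, 0 < y n < eps).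
{ intro n. unfold y. pose proof (cond_pos (RinvN n)).
  assert (RinvN n <= 1).
  { simpl. rewrite <- Rinv_1. apply Rinv_le_contravar; [lra|].
    pose proof (pos_INR n). lra. }
  split; nra. }
assert (Hcvy : Un_cv y 0).
{ replace 0 with (eps / 2 * 0) by ring.
  apply (Un_cv_ex_derive_comp (fun t => eps / 2 * t)); [auto_derive; exact I | apply RinvN_cv]. }
assert (Hcv : forall t, cv_ideal (fun n => (t, y n)) (IFin t))
  by (intro t; split; [exact (Un_cv_const t) | exact Hcvy]).
assert (Hin : forall t n, inH2 (t, y n)) by (intros t n; apply Hy).
destruct (sq_dH_sub_eventually_gt z w tp k _ Hz Hw Hp (Hin tp) (Hcv tp)) as [N1 HN1].
destruct (sq_dH_sub_eventually_gt w z tn (- k) _ Hw Hz Hn (Hin tn) (Hcv tn)) as [N2 HN2].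
set (n := max N1 N2).
specialize (HN1 n ltac:(lia)). specialize (HN2 n ltac:(lia)). cbv beta in HN1, HN2.
destruct (IVT_gen_consistent (fun t => dH (t, y n) z ^ 2 - dH (t, y n) w ^ 2) tn tp k)
  as [t [Ht Hk]].
- intro t. apply (continuous_minus (fun t => dH (t, y n) z ^ 2) (fun t => dH (t, y n) w ^ 2));
    apply continuous_sq_dH_horizontal; auto; apply Hy.
- rewrite Rmin_left, Rmax_right; lra.
- exists (t, y n). split; [split; [apply Hin | exact Hk] | split; [exact Ht | apply Hy]].
Qed.

Lemma quadratic_sign_change al be eps : be <> 0 -> 0 < eps ->
  exists h, 0 < h < eps /\ 0 < be * (be + al * h) /\ 0 < be * (be - al * h).
Proof.
intros Hbe Heps.
assert (Hbe2 : 0 < be ^ 2) by (apply pow2_gt_0; exact Hbe).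
assert (Hsum : 0 < al ^ 2 + be ^ 2) by (pose proof (pow2_ge_0 al); lra).
set (h := Rmin (eps / 2) (be ^ 2 / (al ^ 2 + be ^ 2))).
assert (Hh : 0 < h) by (apply Rmin_glb_lt; [lra | apply Rdiv_lt_0_compat; lra]).
assert (Hheps : h <= eps / 2) by apply Rmin_l.
assert (Hhbe : (al ^ 2 + be ^ 2) * h <= be ^ 2).
{ pose proof (Rmin_r (eps / 2) (be ^ 2 / (al ^ 2 + be ^ 2))) as Hr. fold h in Hr.
  apply (Rmult_le_compat_l (al ^ 2 + be ^ 2)) in Hr; [|lra].
  replace ((al ^ 2 + be ^ 2) * (be ^ 2 / (al ^ 2 + be ^ 2))) with (be ^ 2) in Hr
    by (field; lra).
  exact Hr. }
exists h. split; [lra|].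
(* [2 |al be| <= al^2 + be^2] *)
pose proof (pow2_ge_0 (al + be)). pose proof (pow2_ge_0 (al - be)).
split; nra.
Qed.

Lemma inv_poisson_sub_expand z w a h : inH2 z -> inH2 w ->
  inv_poisson z (a + h) - inv_poisson w (a + h) =
  inv_poisson z a - inv_poisson w a
  + h * ((2 * (a - fst z) / snd z - 2 * (a - fst w) / snd w) + (/ snd z - / snd w) * h).
Proof. unfold inH2, inv_poisson. intros. field. lra. Qed.

(* The slope hypothesis says that [inv_poisson z - inv_poisson w] has derivative 0 at [a]. *)
Lemma inv_poisson_double_root z w a : inH2 z -> inH2 w ->
  inv_poisson z a = inv_poisson w a -> (a - fst z) / snd z = (a - fst w) / snd w -> z = w.
Proof.
unfold inH2. intros Hz Hw Ha Hslope.
set (r := (a - fst z) / snd z) in Hslope.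
assert (Hz1 : a - fst z = r * snd z) by (unfold r; field; lra).
assert (Hw1 : a - fst w = r * snd w) by (rewrite Hslope; field; lra).
assert (Hzw2 : (r ^ 2 + 1) * snd z = (r ^ 2 + 1) * snd w).
{ unfold inv_poisson in Ha. rewrite Hz1, Hw1 in Ha.
  replace ((r * snd z) ^ 2 + snd z ^ 2) with ((r ^ 2 + 1) * snd z * snd z) in Ha by ring.
  replace ((r * snd w) ^ 2 + snd w ^ 2) with ((r ^ 2 + 1) * snd w * snd w) in Ha by ring.
  unfold Rdiv in Ha. rewrite !Rmult_assoc, !Rinv_r in Ha by lra. lra. }
apply Rmult_eq_reg_l in Hzw2; [|pose proof (pow2_ge_0 r); lra].
destruct z as [z1 z2], w as [w1 w2]; simpl in *. subst w2.
f_equal. lra.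
Qed.

Lemma inv_poisson_sign_change z w a eps : inH2 z -> inH2 w -> z <> w ->
  inv_poisson z a = inv_poisson w a -> 0 < eps ->
  exists tp tn, Rabs (tp - a) < eps /\ Rabs (tn - a) < eps /\
    inv_poisson w tp < inv_poisson z tp /\ inv_poisson z tn < inv_poisson w tn.
Proof.
intros Hz Hw Hzw Ha Heps.
set (be := 2 * (a - fst z) / snd z - 2 * (a - fst w) / snd w).
set (al := / snd z - / snd w).
assert (Hsub : forall h, inv_poisson z (a + h) - inv_poisson w (a + h) = h * (be + al * h))
  by (intro h; rewrite inv_poisson_sub_expand by assumption; rewrite Ha; unfold be, al; ring).
assert (Hbe : be <> 0).
{ intro Hbe0. apply Hzw, (inv_poisson_double_root z w a Hz Hw Ha).
  unfold be in Hbe0. unfold inH2 in Hz, Hw.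
  apply (Rmult_eq_reg_l 2); [|lra]. unfold Rdiv in *. lra. }
destruct (quadratic_sign_change al be eps Hbe Heps) as [h [Hh [Hplus Hminus]]].
assert (Habs : Rabs (a + h - a) < eps /\ Rabs (a + - h - a) < eps).
{ replace (a + h - a) with h by ring. replace (a + - h - a) with (- h) by ring.
  rewrite Rabs_Ropp, Rabs_pos_eq; lra. }
pose proof (Hsub h) as Hsubp. pose proof (Hsub (- h)) as Hsubn.
replace (al * - h) with (- (al * h)) in Hsubn by ring.
destruct (Rlt_or_le 0 be) as [Hpos | Hneg].
- exists (a + h), (a + - h). repeat split; try apply Habs; nra.
- exists (a + - h), (a + h). repeat split; try apply Habs; nra.
Qed.

Lemma ideal_endpoints_fin_intro (S : R * R -> Prop) a : (forall x, S x -> inH2 x) ->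
  (forall eps, 0 < eps -> exists x, S x /\ Rabs (fst x - a) < eps /\ snd x < eps) ->
  ideal_endpoints S (IFin a).
Proof.
intros HS Happrox.
assert (Hn : forall n, exists x, S x /\ Rabs (fst x - a) < RinvN n /\ snd x < RinvN n)
  by (intro n; apply Happrox, cond_pos).
set (u := fun n => proj1_sig (constructive_indefinite_description _ (Hn n))).
assert (Hu : forall n, S (u n) /\ Rabs (fst (u n) - a) < RinvN n /\ snd (u n) < RinvN n)
  by (intro n; exact (proj2_sig (constructive_indefinite_description _ (Hn n)))).
exists u. split; [|split].
- intro n. apply Hu.
- apply Un_cv_of_Rabs_lt_RinvN. intro n. apply Hu.
- apply Un_cv_of_Rabs_lt_RinvN. intro n.
  destruct (Hu n) as [Hx [_ Hy]]. pose proof (HS _ Hx) as Hin. unfold inH2 in Hin.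
  rewrite Rminus_0_r, Rabs_pos_eq; lra.
Qed.

Lemma sq_hyperbola_endpoint_fin_sufficient k z w a : inH2 z -> inH2 w -> z <> w ->
  inv_poisson z a = inv_poisson w a -> ideal_endpoints (sq_hyperbola k z w) (IFin a).
Proof.
intros Hz Hw Hzw Ha. apply ideal_endpoints_fin_intro; [intros x Hx; apply Hx|].
intros eps Heps.
destruct (inv_poisson_sign_change z w a eps Hz Hw Hzw Ha Heps) as [tp [tn [Htp [Htn [Hp Hn]]]]].
destruct (sq_hyperbola_crossing k z w tp tn eps Hz Hw Heps Hp Hn) as [x [Hx [Hrange Hy]]].
exists x. split; [exact Hx | split; [|exact Hy]].
apply Rabs_def2 in Htp. apply Rabs_def2 in Htn. apply Rabs_def1;
  unfold Rmin, Rmax in Hrange; destruct (Rle_dec tn tp); lra.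
Qed.

Lemma sq_hyperbola_endpoint_fin_iff k z w a : inH2 z -> inH2 w -> z <> w ->
  ideal_endpoints (sq_hyperbola k z w) (IFin a) <-> inv_poisson z a = inv_poisson w a.
Proof.
intros Hz Hw Hzw. split.
- now apply sq_hyperbola_endpoint_fin_necessary.
- now apply sq_hyperbola_endpoint_fin_sufficient.
Qed.

(** * The endpoint at infinity *)

(* The isometry [x |-> -1/x] of the upper half-plane; it exchanges [IInf] and [IFin 0]. *)
Definition inversion (p : R * R) : R * R :=
  (- fst p / (fst p ^ 2 + snd p ^ 2), snd p / (fst p ^ 2 + snd p ^ 2)).

Lemma norm2_pos p : inH2 p -> 0 < fst p ^ 2 + snd p ^ 2.
Proof.
unfold inH2. intros Hp. pose proof (pow2_ge_0 (fst p)). pose proof (pow_lt (snd p) 2 Hp). lra.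
Qed.

Lemma inversion_inH2 p : inH2 p -> inH2 (inversion p).
Proof.
intros Hp. pose proof (norm2_pos p Hp). unfold inH2 in *. simpl. apply Rdiv_lt_0_compat; lra.
Qed.

Lemma inversion_norm2 p : inH2 p ->
  fst (inversion p) ^ 2 + snd (inversion p) ^ 2 = / (fst p ^ 2 + snd p ^ 2).
Proof. intros Hp. pose proof (norm2_pos p Hp). simpl. field. lra. Qed.

Lemma inversion_involutive p : inH2 p -> inversion (inversion p) = p.
Proof.
intros Hp. pose proof (norm2_pos p Hp).
unfold inversion at 1. rewrite (inversion_norm2 p Hp).
destruct p as [p1 p2]. simpl in *. f_equal; field; lra.
Qed.

Lemma dH_inversion x z : inH2 x -> inH2 z -> dH (inversion x) (inversion z) = dH x z.
Proof.
intros Hx Hz. pose proof (norm2_pos x Hx). pose proof (norm2_pos z Hz).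
unfold inH2 in *. destruct x as [x1 x2], z as [z1 z2]. simpl in *.
rewrite !dH_cosh_dist. f_equal. unfold cosh_dist; simpl. field. lra.
Qed.

Lemma inv_poisson_inversion_0 z : inH2 z -> inv_poisson (inversion z) 0 = / snd z.
Proof.
intros Hz. pose proof (norm2_pos z Hz). unfold inH2 in Hz.
unfold inv_poisson, inversion. simpl. field. lra.
Qed.

Lemma sq_hyperbola_inversion k z w x : inH2 z -> inH2 w -> inH2 x ->
  sq_hyperbola k z w (inversion x) <-> sq_hyperbola k (inversion z) (inversion w) x.
Proof.
intros Hz Hw Hx.
assert (Hdist : forall p, inH2 p -> dH (inversion x) p = dH x (inversion p)).
{ intros p Hp. rewrite <- (dH_inversion x (inversion p) Hx (inversion_inH2 p Hp)).
  now rewrite inversion_involutive. }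
unfold sq_hyperbola. rewrite !Hdist by assumption.
pose proof (inversion_inH2 x Hx). tauto.
Qed.

Lemma cv_infty_iff_inv_cv0 s : (forall n, 0 < s n) ->
  cv_infty s <-> Un_cv (fun n => / s n) 0.
Proof.
intros Hs. split; [apply cv_infty_cv_0|].
intros Hinv M. pose proof (Rle_abs M). pose proof (Rabs_pos M).
destruct (Hinv (/ (Rabs M + 1))) as [N HN]; [apply Rinv_0_lt_compat; lra|].
exists N. intros n Hn. specialize (HN n Hn). specialize (Hs n).
unfold R_dist in HN. rewrite Rminus_0_r, Rabs_pos_eq in HN by (left; now apply Rinv_0_lt_compat).
apply Rinv_lt_cancel in HN; lra.
Qed.

Lemma cv_origin_iff (v : nat -> R * R) :
  Un_cv (fun n => fst (v n) ^ 2 + snd (v n) ^ 2) 0 <->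
  Un_cv (fun n => fst (v n)) 0 /\ Un_cv (fun n => snd (v n)) 0.
Proof.
split.
- intros Hv.
  assert (Hcoord : forall (c : R -> R -> R), (forall p q, c p q ^ 2 <= p ^ 2 + q ^ 2) ->
            Un_cv (fun n => c (fst (v n)) (snd (v n))) 0).
  { intros c Hc eps Heps. destruct (Hv (eps ^ 2) ltac:(nra)) as [N HN]. exists N. intros n Hn.
    specialize (HN n Hn). specialize (Hc (fst (v n)) (snd (v n))).
    unfold R_dist in *. rewrite Rminus_0_r in *.
    pose proof (Rle_abs (fst (v n) ^ 2 + snd (v n) ^ 2)).
    pose proof (Rabs_pos (c (fst (v n)) (snd (v n)))). rewrite <- pow2_abs in Hc. nra. }
  split; [apply (Hcoord (fun p _ => p)) | apply (Hcoord (fun _ q => q))];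
    intros p q; pose proof (pow2_ge_0 p); pose proof (pow2_ge_0 q); lra.
- intros [Hfst Hsnd].
  replace 0 with (0 ^ 2 + 0 ^ 2) by ring.
  apply CV_plus; apply (Un_cv_ex_derive_comp (fun t => t ^ 2)); auto; auto_derive; exact I.
Qed.

Lemma cv_ideal_inf_inversion u v : (forall n, inH2 (u n)) -> (forall n, v n = inversion (u n)) ->
  cv_ideal u IInf <-> cv_ideal v (IFin 0).
Proof.
intros Hu Hv. simpl.
rewrite cv_infty_iff_inv_cv0 by (intro n; apply norm2_pos, Hu).
rewrite <- cv_origin_iff.
split; intro Hcv; refine (Un_cv_ext _ _ _ _ Hcv); intro n;
  rewrite Hv, inversion_norm2 by apply Hu; reflexivity.
Qed.

Lemma ideal_endpoints_inf_inversion (S T : R * R -> Prop) :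
  (forall x, S x -> inH2 x) -> (forall x, T x -> inH2 x) ->
  (forall x, inH2 x -> S (inversion x) <-> T x) ->
  ideal_endpoints S IInf <-> ideal_endpoints T (IFin 0).
Proof.
intros HS HT HST. split.
- intros [u [Hu Hcv]]. exists (fun n => inversion (u n)).
  assert (Hin : forall n, inH2 (u n)) by (intro n; apply HS, Hu).
  split.
  + intro n. apply HST; [now apply inversion_inH2|]. now rewrite inversion_involutive.
  + now apply (cv_ideal_inf_inversion u).
- intros [v [Hv Hcv]]. exists (fun n => inversion (v n)).
  assert (Hin : forall n, inH2 (v n)) by (intro n; apply HT, Hv).
  split.
  + intro n. now apply HST.
  + refine (proj2 (cv_ideal_inf_inversion _ v _ _) Hcv); intro n.
    * now apply inversion_inH2.
    * now rewrite inversion_involutive.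
Qed.

Lemma sq_hyperbola_endpoint_inf_iff k z w : inH2 z -> inH2 w -> z <> w ->
  ideal_endpoints (sq_hyperbola k z w) IInf <-> snd z = snd w.
Proof.
intros Hz Hw Hzw.
assert (Hzw' : inversion z <> inversion w).
{ intro E. apply Hzw. now rewrite <- (inversion_involutive z), <- (inversion_involutive w), E. }
rewrite (ideal_endpoints_inf_inversion _ (sq_hyperbola k (inversion z) (inversion w)));
  [| intros x Hx; apply Hx | intros x Hx; apply Hx | intros x Hx; now apply sq_hyperbola_inversion].
rewrite sq_hyperbola_endpoint_fin_iff by (try apply inversion_inH2; assumption).
rewrite !inv_poisson_inversion_0 by assumption.
split; intro E; [rewrite <- (Rinv_inv (snd z)), E, Rinv_inv | rewrite E]; reflexivity.
Qed.

Definition bisector_endpoint (z w : R * R) (xi : ideal_pt) : Prop :=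
  match xi with
  | IFin a => inv_poisson z a = inv_poisson w a
  | IInf => snd z = snd w
  end.

Lemma sq_hyperbola_endpoints k z w xi : inH2 z -> inH2 w -> z <> w ->
  ideal_endpoints (sq_hyperbola k z w) xi <-> bisector_endpoint z w xi.
Proof.
intros Hz Hw Hzw. destruct xi as [a|].
- now apply sq_hyperbola_endpoint_fin_iff.
- now apply sq_hyperbola_endpoint_inf_iff.
Qed.

Lemma ideal_endpoints_ext (S T : R * R -> Prop) xi : (forall x, S x <-> T x) ->
  ideal_endpoints S xi <-> ideal_endpoints T xi.
Proof. intros HST. split; intros [u [Hu Hcv]]; exists u; split; auto; intro n; apply HST, Hu. Qed.

Lemma equidistant_iff_sq_hyperbola0 z w x : inH2 z -> inH2 w ->
  equidistant z w x <-> sq_hyperbola 0 z w x.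
Proof.
intros Hz Hw. unfold equidistant, sq_hyperbola. split; intros [Hx Hd]; split; auto.
- rewrite Hd. ring.
- pose proof (dH_ge0 x z Hx Hz). pose proof (dH_ge0 x w Hx Hw). nra.
Qed.

Theorem mainTheorem2 (z w : R * R) (k : R) :
  inH2 z -> inH2 w -> z <> w ->
  forall xi : ideal_pt,
    ideal_endpoints (sq_hyperbola k z w) xi <-> ideal_endpoints (equidistant z w) xi.
Proof.
intros Hz Hw Hzw xi.
rewrite (ideal_endpoints_ext (equidistant z w) (sq_hyperbola 0 z w))
  by (intro x; now apply equidistant_iff_sq_hyperbola0).
rewrite !sq_hyperbola_endpoints by assumption.
reflexivity.
Qed.
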